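(* Let $n,m$ be positive integers. For $\lambda\in\mathcal{P}^m_n$ let $\bar\varphi_n(\lambda)=\{k_{i,j}(\lambda):1\le i\le j\le n\}$, where $$k_{i,j}(\lambda)=\min\left\{m,\left\lceil\frac{\lambda_i-\sum_{\ell=j+1}^n k_{i,\ell}(\lambda)+\sum_{\ell=i+1}^j k_{\ell,j}(\lambda)}{j-i+1}\right\rceil\right\}$$ (defined recursively in order of decreasing $i$, and for fixed $i$ decreasing $j$). Then the image $\bar\varphi_n(\mathcal{P}^m_n)$ is exactly the set of Shi tableaux $\{k_{i,j}(R)\}$ of the dominant regions $R\in\mathcal{R}^m_n$.
   Context: $\mathcal{P}^m_n$ is the set of integer partitions $(\lambda_1\ge\cdots\ge\lambda_n\ge0)$ with $\lambda_i\le m(n-i+1)$. Type $A_n$: $V=\{x\in\mathbb{R}^{n+1}:\sum x_i=0\}$, positive roots $\alpha_{ij}=\varepsilon_i-\varepsilon_{j+1}$ ($1\le i\le j\le n$), $H_{\alpha,k}=\{v:\langle v,\alpha\rangle=k\}$; $\mathrm{Cat}^m(A_n)$ consists of the $H_{\alpha,k}$ with $\alpha$ positive, $0\le k\le m$; $\mathcal{R}^m_n$ is its set of dominant regions (regions contained in $\{v:\langle v,\alpha\rangle\ge0\ \forall\alpha>0\}$). The Shi tableau of $R\in\mathcal{R}^m_n$ is the family $k_{i,j}(R)\in\{0,\dots,m\}$, $1\le i\le j\le n$, where $k_{i,j}(R)$ is the unique $k$ with $k\le\langle\alpha_{ij},x\rangle\le k+1$ for all $x\in R$ if $k<m$, and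 $\langle\alpha_{ij},x\rangle\ge m$ for all $x\in R$ if $k=m$. Both tableaux are arranged in the staircase diagram of shape $(n,\dots,1)$ with entry $k_{i,j}$ in row $i$, column $n-j+1$. *)

From HB Require Import structures.
From mathcomp Require Import all_boot all_order all_algebra.
From mathcomp Require Import all_classical all_reals.
From mathcomp Require Import topology normedtype.
Import numFieldTopology.Exports numFieldNormedType.Exports.
Unset Printing Implicit Defensive.
Import Order.TTheory GRing.Theory Num.Theory.
Local Open Scope ring_scope.
Local Open Scope classical_set_scope.

Definition partitionP (m n : nat) (lam : nat -> nat) : Prop :=
  (forall i : nat, (1 <= i)%N -> (i < n)%N -> (lam i.+1 <= lam i)%N) /\
  (forall i : nat, (1 <= i)%N -> (i <= n)%N -> (lam i <= m * (n - i + 1))%N).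

Fixpoint phibar_fuel (m n : nat) (lam : nat -> nat) (fuel : nat) (i j : nat)
  : int :=
  match fuel with
  | 0%N => 0
  | f.+1 =>
      Num.min (m%:Z)
        (Num.ceil
          ((((lam i)%:Z
              - \sum_(j.+1 <= l < n.+1) phibar_fuel m n lam f i l
              + \sum_(i.+1 <= l < j.+1) phibar_fuel m n lam f l j)%:~R : rat)
           / ((j - i + 1)%:R)))
  end.

(* Every recursive call from (i,j) with 1 <= i <= j <= n strictly decreases
   the measure (n-i)(n+1)+(n-j) < (n+1)^2, so fuel (n+1)^2 suffices for the
   recursion (in decreasing i, and for fixed i decreasing j) to bottom out. *)
Definition phibar (m n : nat) (lam : nat -> nat) (i j : nat) : int :=
  phibar_fuel m n lam (n.+1 * n.+1) i j.

(* Points of R^{n+1} are row vectors; coordinate eps_k (1-based) is x 0 (k-1). *)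
Notation pt R n := ('rV[R]_(n.+1)) (only parsing).

Definition Vspace (R : realType) (n : nat) : set (pt R n) :=
  [set x | \sum_(k < n.+1) x 0 k = 0].

(* < alpha_{ij}, x > = x_i - x_{j+1}  (1-based), for 1 <= i <= j <= n *)
Definition adot {R : realType} {n : nat} (i j : nat) (x : pt R n) : R :=
  x 0 (inord i.-1) - x 0 (inord j).

Definition cat_complement (R : realType) (m n : nat) : set (pt R n) :=
  [set x | Vspace R n x /\
     forall (i j k : nat), (1 <= i)%N -> (i <= j)%N -> (j <= n)%N ->
       (k <= m)%N -> adot i j x != k%:R].

Definition cat_region (R : realType) (m n : nat) (Reg : set (pt R n)) : Prop :=
  exists2 x, cat_complement R m n x &
    Reg = connected_component (cat_complement R m n) x.

Definition dominant (R : realType) (n : nat) : set (pt R n) :=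
  [set v | forall (i j : nat), (1 <= i)%N -> (i <= j)%N -> (j <= n)%N ->
             0 <= adot i j v].

Definition dominant_region (R : realType) (m n : nat) (Reg : set (pt R n))
  : Prop := cat_region R m n Reg /\ Reg `<=` dominant R n.

Definition shi_entry (R : realType) (m n : nat) (Reg : set (pt R n))
  (i j : nat) (k : int) : Prop :=
  0 <= k <= m%:Z /\
  (k < m%:Z -> forall x, Reg x -> k%:~R <= adot i j x <= (k + 1)%:~R) /\
  (k = m%:Z -> forall x, Reg x -> (m%:R : R) <= adot i j x).

From HB Require Import structures.
From mathcomp Require Import all_boot all_order all_algebra.
From mathcomp Require Import all_classical all_reals.
From mathcomp Require Import topology normedtype.
From mathcomp Require Import zify ring lra.
Import numFieldTopology.Exports numFieldNormedType.Exports.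
Import Order.TTheory GRing.Theory Num.Theory.
Local Open Scope ring_scope.

(* A dominant point [x] is described by its gaps [y_l = x_l - x_(l+1) >= 0],
   with [<alpha_ij, x> = y_i + ... + y_j], and the Shi tableau of its region is
   [k_ij = min(m, floor <alpha_ij, x>)].  Since [alpha_ij = alpha_it +
   alpha_(t+1)j], the floors satisfy [k_ij - 1 <= k_it + k_(t+1)j <= k_ij]
   (the upper bound when [k_ij < m]), so summing over [t] shows that the
   tableau solves the recursion defining [phibar] for [lam_i = sum_j k_ij],
   which is a partition in [P^m_n]; hence [phibar] recovers every tableau.
   Conversely, given [lam], the gaps are chosen row by row from the bottom: as
   [y_i] grows, [sum_j k_ij] rises by one at each of finitely many breakpoints,
   so every value between [lam_(i+1)] and [m (n-i+1)] is attained at a gap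
   avoiding all hyperplanes.  Levels are constant on connected components of
   the complement, so the region of the resulting point has tableau [phibar lam]. *)

Section ShiLevel.
Context {R : archiRealFieldType} (m : nat).

Definition shi_level (u : R) : int := Num.min m%:Z (Num.floor u).

Definition off_levels (u : R) := forall b : nat, (b <= m)%N -> u != b%:R.

Definition generic (u : R) := 0 < u /\ off_levels u.

Lemma shi_level_ge0 u : 0 <= u -> 0 <= shi_level u.
Proof.
move=> u0; have : 0 <= Num.floor u by rewrite floor_ge0.
rewrite /shi_level; lia.
Qed.

Lemma shi_level0 : shi_level 0 = 0.
Proof. by rewrite /shi_level floor0; lia. Qed.

Lemma shi_level_le u : shi_level u <= m%:Z.
Proof. rewrite /shi_level; lia. Qed.

Lemma le_shi_level u v : u <= v -> shi_level u <= shi_level v.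
Proof. by move=> /le_floor; rewrite /shi_level; lia. Qed.

Lemma shi_levelD u v : 0 <= u -> 0 <= v ->
  shi_level (u + v) - 1 <= shi_level u + shi_level v /\
  (shi_level (u + v) < m%:Z -> shi_level u + shi_level v <= shi_level (u + v)).
Proof.
move=> u0 v0; rewrite /shi_level.
have : 0 <= Num.floor u by rewrite floor_ge0.
have : 0 <= Num.floor v by rewrite floor_ge0.
have lo : Num.floor u + Num.floor v <= Num.floor (u + v).
  by rewrite floor_ge_int intrD lerD ?floor_le.
have hi : Num.floor (u + v) < Num.floor u + 1 + (Num.floor v + 1).
  by rewrite floor_lt_int intrD ltrD ?floorD1_gt.
split; lia.
Qed.

Lemma shi_level_count u : 0 <= u ->
  shi_level u = (count (fun b : nat => b%:R <= u) (iota 1 m))%:Z.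
Proof.
move=> u0; have f0 : 0 <= Num.floor u by rewrite floor_ge0.
rewrite /shi_level; elim: m => [|k IHk]; first by rewrite /=; lia.
rewrite -[in RHS](addn1 k) iotaD count_cat /= addn0 PoszD -IHk.
have [ku|ku] := boolP ((1 + k)%:R <= u).
  have : (1 + k)%:Z <= Num.floor u by rewrite floor_ge_int.
  lia.
have : Num.floor u < (1 + k)%:Z by rewrite floor_lt_int ltNge.
lia.
Qed.

Lemma shi_levelP u (k : int) : 0 <= u -> off_levels u ->
  [/\ 0 <= k <= m%:Z, k < m%:Z -> k%:~R <= u <= (k + 1)%:~R
    & k = m%:Z -> m%:R <= u] <-> k = shi_level u.
Proof.
move=> u0 offu; rewrite /shi_level; split.
- case=> /andP[k0 km] hlt heq; have [klt|kge] := ltP k m%:Z.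
    have /andP[ku uk1] := hlt klt.
    have k1u : u < (k + 1)%:~R.
      rewrite lt_neqAle uk1 andbT; have -> : k + 1 = (`|k| + 1)%N :> int by lia.
      by apply: offu; lia.
    by rewrite (floor_def (introT andP (conj ku k1u))); lia.
  have km' : k = m%:Z by lia.
  have : m%:Z <= Num.floor u by rewrite floor_ge_int; apply: heq.
  lia.
- move=> ->; have f0 : 0 <= Num.floor u by rewrite floor_ge0.
  split; first lia.
  + move=> h; have -> : Num.min m%:Z (Num.floor u) = Num.floor u by lia.
    by rewrite floor_le ltW // floorD1_gt.
  + move=> h; have : m%:Z <= Num.floor u by lia.
    by rewrite floor_ge_int.
Qed.

End ShiLevel.

Lemma min_ceil_ratio (m l : nat) (K S : int) : 0 <= K <= m%:Z ->
  (K - 1) * l%:Z <= S -> (K < m%:Z -> S <= K * l%:Z) ->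
  Num.min m%:Z (Num.ceil (((K + S)%:~R : rat) / (l + 1)%:R)) = K.
Proof.
move=> /andP[K0 Km] Slo Shi.
have l1_gt0 : (0 : rat) < (l + 1)%:R by rewrite ltr0n addn1.
have l1E : (l + 1)%:R = ((l + 1)%N%:Z)%:~R :> rat by [].
have lo : K - 1 < Num.ceil (((K + S)%:~R : rat) / (l + 1)%:R).
  by rewrite ceil_gt_int ltr_pdivlMr // l1E -intrM ltr_int; lia.
have [Klt|Kge] := ltP K m%:Z; last lia.
have : Num.ceil (((K + S)%:~R : rat) / (l + 1)%:R) <= K.
  by rewrite ceil_le_int ler_pdivrMr // l1E -intrM ler_int; have := Shi Klt; lia.
lia.
Qed.

Definition phibar_step (m n : nat) (lam : nat -> nat) (g : nat -> nat -> int)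
    (i j : nat) : int :=
  Num.min (m%:Z)
    (Num.ceil ((((lam i)%:Z - \sum_(j.+1 <= l < n.+1) g i l
                  + \sum_(i.+1 <= l < j.+1) g l j)%:~R : rat)
               / ((j - i + 1)%:R))).

Lemma phibar_unique (m n : nat) (lam : nat -> nat) (g : nat -> nat -> int) :
  (forall i j, (1 <= i)%N -> (i <= j)%N -> (j <= n)%N ->
     g i j = phibar_step m n lam g i j) ->
  forall i j, (1 <= i)%N -> (i <= j)%N -> (j <= n)%N ->
    phibar m n lam i j = g i j.
Proof.
move=> gE.
suff fuelE f i j : (1 <= i)%N -> (i <= j)%N -> (j <= n)%N ->
    ((n - i) * n.+1 + (n - j) < f)%N -> phibar_fuel m n lam f i j = g i j.
  by move=> i j i1 ij jn; apply: fuelE => //; nia.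
elim: f i j => [|f IHf] i j i1 ij jn // fuel_gt; rewrite gE //=.
congr (Num.min _ (Num.ceil ((_ - _ + _)%:~R / _))).
  by apply: eq_big_nat => l /andP[jl ln]; apply: IHf; lia.
by apply: eq_big_nat => l /andP[il lj]; apply: IHf; nia.
Qed.

Lemma phibar_shi_level (R : archiRealFieldType) (m n : nat)
    (d : nat -> nat -> R) (lam : nat -> nat) :
  (forall i t j, (1 <= i)%N -> (i <= t)%N -> (t < j)%N -> (j <= n)%N ->
     d i j = d i t + d t.+1 j) ->
  (forall i j, (1 <= i)%N -> (i <= j)%N -> (j <= n)%N -> 0 <= d i j) ->
  (forall i, (1 <= i)%N -> (i <= n)%N ->
     (lam i)%:Z = \sum_(i <= j < n.+1) shi_level m (d i j)) ->
  forall i j, (1 <= i)%N -> (i <= j)%N -> (j <= n)%N ->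
    phibar m n lam i j = shi_level m (d i j).
Proof.
move=> dD d0 lamE; apply: phibar_unique => i j i1 ij jn.
rewrite /phibar_step lamE ?(leq_trans ij) // (@big_cat_nat _ _ _ j.+1 i n.+1 _ _ (leqW ij)) //=.
rewrite addrK big_nat_recr //= big_add1 /= addrAC -big_split addrC.
set K := shi_level m (d i j).
have split_bounds t : (i <= t < j)%N ->
    K - 1 <= shi_level m (d i t) + shi_level m (d t.+1 j) /\
    (K < m%:Z -> shi_level m (d i t) + shi_level m (d t.+1 j) <= K).
  move=> /andP[it tj]; rewrite /K (dD i t j) //.
  by apply: shi_levelD; apply: d0 => //; lia.
rewrite min_ceil_ratio //.
- by rewrite shi_level_ge0 ?shi_level_le ?d0.
- rewrite -natz mulr_natr -sumr_const_nat.
  by apply: ler_sum_nat => t /split_bounds [].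
- move=> Klt; rewrite -natz mulr_natr -sumr_const_nat.
  by apply: ler_sum_nat => t /split_bounds [_ ->].
Qed.

Lemma exists_gap_above {R : realFieldType} (P : seq R) (s : R) :
  exists2 s', s < s' & forall p, p \in P -> s < p -> s' < p.
Proof.
elim: P => [|p P [s' ss' IHP]]; first by exists (s + 1) => //; lra.
have [/andP[sp ps']|] := boolP ((s < p) && (p <= s')).
  exists ((s + p) / 2); first lra.
  move=> q; rewrite inE => /orP[/eqP->|qP] sq; first lra.
  by have := IHP q qP sq; lra.
rewrite negb_and -leNgt -ltNge => sp_or.
exists s' => // q; rewrite inE => /orP[/eqP->|qP] sq; last exact: IHP.
by case/orP: sp_or => //; rewrite leNgt sq.
Qed.

Lemma exists_min_above {d} {T : orderType d} (P : seq T) (s : T) :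
  has (fun p => s < p)%O P ->
  exists u, [/\ u \in P, (s < u)%O & forall p, p \in P -> (s < p)%O -> (u <= p)%O].
Proof.
move=> hasP; set Q := sort <=%O [seq p <- P | (s < p)%O].
have memQ p : (p \in Q) = (p \in P) && (s < p)%O by rewrite mem_sort mem_filter andbC.
case eQ: Q => [|u Q']; first by move: hasP; rewrite has_filter -size_eq0 -(size_sort <=%O) -/Q eQ.
have /andP[uP su] : (u \in P) && (s < u)%O by rewrite -memQ eQ mem_head.
exists u; split=> // p pP sp; have : p \in Q by rewrite memQ pP.
rewrite eQ inE => /orP[/eqP-> //|pQ'].
have : sorted <=%O Q by apply: sort_sorted; apply: le_total.
by rewrite eQ /= => /(order_path_min le_trans)/allP; apply.
Qed.

(* [s |-> count (<= s) P] is a step function rising by exactly one at each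
   element of the duplicate-free list [P]. *)
Lemma exists_count_le_eq {R : realFieldType} (P : seq R) (c : nat) : uniq P ->
  (count (fun p => (p <= 0)%R) P <= c <= size P)%N ->
  exists s, [/\ 0 < s, s \notin P & count (fun p => p <= s) P = c].
Proof.
move=> uniqP /andP[c0 cP].
have nudge s : exists s', [/\ s < s', s' \notin P &
    count (fun p => p <= s') P = count (fun p => p <= s) P].
  have [s' ss' gap] := exists_gap_above P s; exists s'; split=> //.
    by apply/negP => /gap /(_ ss'); rewrite ltxx.
  apply: eq_in_count => p pP /=; have [ps|sp] := leP p s.
    by rewrite (le_trans ps (ltW ss')).
  by apply/negbTE; rewrite -ltNge gap.
suff reach k : (count (fun p => (p <= 0)%R) P + k <= size P)%N ->
    exists s, [/\ 0 < s, s \notin P &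
      count (fun p => p <= s) P = (count (fun p => (p <= 0)%R) P + k)%N].
  by have := reach (c - count (fun p => (p <= 0)%R) P)%N; rewrite subnKC //; apply.
elim: k => [|k IHk] kP.
  by have [s [s0 sP cs]] := nudge 0; exists s; rewrite addn0.
have [|s [s0 sP cs]] := IHk; first lia.
have [|u [uP su umin]] := exists_min_above P s.
  apply/negPn/negP => /hasPn notabove.
  suff : count (fun p => p <= s) P = size P by rewrite cs; lia.
  by rewrite -count_predT; apply: eq_in_count => p /notabove; rewrite -leNgt.
have [s' [us' s'P cs']] := nudge u.
exists s'; split=> //; first by rewrite (lt_trans s0 (lt_trans su us')).
have -> : (count (fun p => (p <= 0)%R) P + k.+1
           = count (fun p => (p <= s)%R) P + count_mem u P)%N.
  by rewrite (count_uniq_mem u uniqP) uP cs addnS addn1.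
rewrite cs' -count_predUI (@eq_count _ (predI _ _) pred0) ?count_pred0 ?addn0.
  apply: eq_in_count => p pP /=; have [ps|sp] := leP p s.
    by rewrite (le_trans ps (ltW su)).
  by rewrite le_eqVlt ltNge umin // orbF.
by move=> p /=; case: eqP => [->|]; rewrite ?andbF // leNgt su.
Qed.

Section GapSums.
Variable V : nmodType.
Implicit Type y : nat -> V.

Definition gapsum y (i j : nat) : V := \sum_(i <= l < j.+1) y l.

Lemma gapsum_cat y i t j :
  (i <= t.+1)%N -> (t <= j)%N -> gapsum y i j = gapsum y i t + gapsum y t.+1 j.
Proof. by move=> it tj; rewrite /gapsum (@big_cat_nat _ _ _ t.+1). Qed.

Lemma gapsum_nil y i : gapsum y i.+1 i = 0.
Proof. by rewrite /gapsum big_geq. Qed.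

Lemma gapsumS y i j : (i <= j)%N -> gapsum y i j = y i + gapsum y i.+1 j.
Proof. by move=> ij; rewrite /gapsum big_ltn. Qed.

Lemma gapsum_eq y y' i j :
  (forall l, (i <= l <= j)%N -> y l = y' l) -> gapsum y i j = gapsum y' i j.
Proof. by move=> yy'; apply: eq_big_nat => l /andP[il lj]; rewrite yy' ?il. Qed.

End GapSums.

Arguments gapsum {V}.

Section Breakpoints.
Variables (R : archiRealFieldType) (m n : nat) (y : nat -> R) (r : nat).

(* Setting [y r := s] moves the level of [gapsum y r j] exactly when [s]
   crosses one of these values. *)
Definition breakpoints : seq R :=
  [seq b%:R - gapsum y r.+1 j | j <- index_iota r n.+1, b <- iota 1 m].

Lemma count_breakpoints (s : R) :
  (forall j, (r <= j <= n)%N -> 0 <= s + gapsum y r.+1 j) ->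
  (count (fun p => p <= s) breakpoints)%:Z =
    \sum_(r <= j < n.+1) shi_level m (s + gapsum y r.+1 j).
Proof.
move=> s_ge0; rewrite count_flatten sumnE !big_map.
rewrite (big_morph Posz PoszD (erefl 0%:Z)); apply: eq_big_nat => j rjn.
rewrite count_map shi_level_count ?s_ge0 //.
by congr Posz; apply: eq_count => b /=; rewrite lerBlDr.
Qed.

Lemma size_breakpoints : size breakpoints = ((n.+1 - r) * m)%N.
Proof. by rewrite size_allpairs size_iota size_iota. Qed.

Lemma mem_breakpoints j (b : nat) : (r <= j <= n)%N -> (1 <= b <= m)%N ->
  b%:R - gapsum y r.+1 j \in breakpoints.
Proof.
move=> rjn bm; apply/allpairsP; exists (j, b).
by rewrite mem_index_iota mem_iota; split=> //; lia.
Qed.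

Lemma uniq_breakpoints :
  (forall i j, (r < i)%N -> (i <= j)%N -> (j <= n)%N -> generic m (gapsum y i j)) ->
  uniq breakpoints.
Proof.
move=> gen; apply: allpairs_uniq; rewrite ?iota_uniq //.
suff neq j j' (b b' : nat) : (r <= j)%N -> (j < j')%N -> (j' <= n)%N ->
    (1 <= b <= m)%N -> (1 <= b' <= m)%N ->
    b%:R - gapsum y r.+1 j != b'%:R - gapsum y r.+1 j'.
  move=> _ _ /allpairsP[[j b] [/= hj hb ->]] /allpairsP[[j' b'] [/= hj' hb' ->]] /= e.
  move: hj hb hj' hb'; rewrite !mem_index_iota !mem_iota => hj hb hj' hb'.
  have [jj'|j'j|jj'] := ltngtP j j'.
  - by move: e => /eqP; rewrite (negbTE (neq _ _ _ _ _ jj' _ _ _)) //; lia.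
  - by move: e => /esym /eqP; rewrite (negbTE (neq _ _ _ _ _ j'j _ _ _)) //; lia.
  - by subst j'; move: (addIr _ e) => /eqP; rewrite eqr_nat => /eqP ->.
move=> rj jj' j'n /andP[b1 bm] /andP[b'1 b'm]; apply/eqP => e.
have gapE : gapsum y j.+1 j' = b'%:R - b%:R.
  by move: e; rewrite (@gapsum_cat _ y r.+1 j j') //; [lra | lia].
have [gap_gt0 gap_off] := gen j.+1 j' ltac:(lia) jj' j'n.
have bb' : (b < b')%N by rewrite -(ltr_nat R) -subr_gt0 -gapE.
by move: (gap_off (b' - b)%N ltac:(lia)); rewrite gapE natrB ?eqxx // ltnW.
Qed.

End Breakpoints.

Arguments breakpoints {R}.
Arguments count_breakpoints {R m n y r}.
Arguments mem_breakpoints {R m n y r}.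
Arguments uniq_breakpoints {R m n y r}.

Lemma exists_row_offset (R : archiRealFieldType) (m n : nat) (y : nat -> R)
    (r c : nat) : (r <= n)%N ->
  (forall i j, (r < i)%N -> (i <= j)%N -> (j <= n)%N -> generic m (gapsum y i j)) ->
  (\sum_(r.+1 <= j < n.+1) shi_level m (gapsum y r.+1 j) <= c%:Z) ->
  (c <= (n - r + 1) * m)%N ->
  exists2 s : R, forall j, (r <= j <= n)%N -> generic m (s + gapsum y r.+1 j) &
    c%:Z = \sum_(r <= j < n.+1) shi_level m (s + gapsum y r.+1 j).
Proof.
move=> rn gen c_lo c_hi.
have gap_ge0 j : (r <= j <= n)%N -> 0 <= gapsum y r.+1 j.
  case/andP; rewrite leq_eqVlt => /orP[/eqP<- _|rj jn]; first by rewrite gapsum_nil.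
  by have [/ltW] := gen r.+1 j (ltnSn r) rj jn.
have count0E : (count (fun p => (p <= 0)%R) (breakpoints m n y r))%:Z =
    \sum_(r.+1 <= j < n.+1) shi_level m (gapsum y r.+1 j).
  rewrite count_breakpoints => [|j /gap_ge0]; last by rewrite add0r.
  rewrite big_ltn ?ltnS // gapsum_nil addr0 shi_level0 add0r.
  by under eq_big_nat => j _ do rewrite add0r.
have [|s [s_gt0 s_off sE]] := exists_count_le_eq _ c (uniq_breakpoints gen).
  rewrite -lez_nat count0E c_lo size_breakpoints /=.
  by apply: (leq_trans c_hi); apply: leq_mul; lia.
exists s => [j rjn|].
  have pos : 0 < s + gapsum y r.+1 j by have := gap_ge0 j rjn; lra.
  split=> // -[_|b bm]; first exact: lt0r_neq0.
  apply/eqP => e; move: s_off; rewrite -(addrK (gapsum y r.+1 j) s) e.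
  by rewrite mem_breakpoints // ltn0Sn.
by rewrite -sE count_breakpoints // => j /gap_ge0; lra.
Qed.

Lemma exists_generic_gaps (R : archiRealFieldType) {m n : nat} {lam : nat -> nat} :
  partitionP m n lam -> exists y : nat -> R,
    (forall i j, (1 <= i)%N -> (i <= j)%N -> (j <= n)%N -> generic m (gapsum y i j)) /\
    (forall i, (1 <= i)%N -> (i <= n)%N ->
       (lam i)%:Z = \sum_(i <= j < n.+1) shi_level m (gapsum y i j)).
Proof.
case=> lam_mono lam_bound.
suff rows q : (q <= n)%N -> exists y : nat -> R,
    (forall i j, (n - q < i)%N -> (i <= j)%N -> (j <= n)%N -> generic m (gapsum y i j)) /\
    (forall i, (n - q < i)%N -> (i <= n)%N ->
       (lam i)%:Z = \sum_(i <= j < n.+1) shi_level m (gapsum y i j)).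
  by have [y [gen lamE]] := rows n (leqnn n); exists y; rewrite subnn in gen lamE.
elim: q => [_|q IHq qn]; first by exists (fun=> 0); split=> i *; lia.
have [y [gen lamE]] := IHq (ltnW qn).
set r := (n - q)%N in gen lamE; have r1 : (1 <= r)%N by rewrite /r; lia.
have rn : (r <= n)%N by rewrite /r; lia.
have [||s s_gen s_sum] := @exists_row_offset R m n y r (lam r) rn gen.
- have [rn'|nr] := ltnP r n; last by rewrite big_geq.
  by rewrite -lamE // lez_nat lam_mono.
- by rewrite mulnC lam_bound.
pose y' l := if l == r then s else y l.
have y'E i j : (r < i)%N -> gapsum y' i j = gapsum y i j.
  by move=> ri; apply: gapsum_eq => l /andP[il _]; rewrite /y' ifN //; lia.
have y'rE j : (r <= j)%N -> gapsum y' r j = s + gapsum y r.+1 j.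
  by move=> rj; rewrite gapsumS // y'E // /y' eqxx.
exists y'; split=> [i j ri ij jn | i ri i_le].
  have [{}ri|ir] := ltnP r i; first by rewrite y'E //; apply: gen.
  have ei : i = r by lia.
  by rewrite ei in ij *; rewrite y'rE //; apply: s_gen; rewrite ij.
have [{}ri|ir] := ltnP r i.
  by rewrite lamE //; apply: eq_big_nat => j /andP[ij _]; rewrite y'E.
have -> : i = r by lia.
by rewrite s_sum; apply: eq_big_nat => j /andP[rj _]; rewrite y'rE.
Qed.

Section ConnectedAvoid.
Local Open Scope classical_set_scope.

Lemma connected_avoid_lt {T : topologicalType} {R : realFieldType} (C : set T)
    (f : T -> R) (b : R) :
  connected C -> continuous f -> (forall z, C z -> f z != b) ->
  forall z w, C z -> C w -> f z < b -> f w < b.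
Proof.
move=> C_conn f_cont f_avoid z w Cz Cw fzb.
suff : C `&` [set x | f x < b] = C by move=> /seteqP[_ /(_ w Cw) []].
apply: C_conn; first by exists z.
- exists (f @^-1` [set x | x < b]) => //.
  by move: (continuousP f).1 => /(_ f_cont); apply; apply: open_lt.
- exists (f @^-1` [set x | x <= b]).
    by move: (continuous_closedP f).1 => /(_ f_cont); apply; apply: closed_le.
  apply/seteqP; split=> x /= [Cx fx]; split=> //; first exact: ltW.
  by rewrite lt_neqAle fx andbT f_avoid.
Qed.

End ConnectedAvoid.

Lemma continuous_adot {R : realType} {n : nat} (i j : nat) :
  continuous (fun x : pt R n => adot i j x).
Proof. by move=> x; apply: continuousB; apply: coord_continuous. Qed.

Lemma adot_split {R : realType} {n : nat} (x : pt R n) i t j :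
  adot i j x = adot i t x + adot t.+1 j x.
Proof. by rewrite /adot /=; ring. Qed.

Lemma cat_complement_off_levels {R : realType} {m n : nat} {x : pt R n} {i j : nat} :
  cat_complement R m n x -> (1 <= i)%N -> (i <= j)%N -> (j <= n)%N ->
  off_levels m (adot i j x).
Proof. by move=> [_ avoid] i1 ij jn b; apply: avoid. Qed.

(* The coordinates are the tail sums of [y], shifted to have sum zero. *)
Lemma exists_point_adot {R : realType} (n : nat) (y : nat -> R) :
  exists2 x : pt R n, Vspace R n x &
    forall i j, (1 <= i)%N -> (i <= j)%N -> (j <= n)%N -> adot i j x = gapsum y i j.
Proof.
pose mu := (\sum_(c < n.+1) gapsum y c.+1 n) / n.+1%:R.
exists (\row_(c < n.+1) (gapsum y c.+1 n - mu)).
  rewrite /Vspace /=; under eq_bigr do rewrite mxE.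
  by rewrite sumrB sumr_const card_ord -mulr_natr /mu divfK ?subrr ?pnatr_eq0.
move=> i j i1 ij jn; rewrite /adot !mxE !inordK ?prednK //; try lia.
by rewrite (@gapsum_cat _ y i j n) //; [ring | lia].
Qed.

Lemma component_shi_level {R : realType} {m n : nat} (x z : pt R n) i j :
  cat_complement R m n x -> connected_component (cat_complement R m n) x z ->
  (1 <= i)%N -> (i <= j)%N -> (j <= n)%N -> 0 < adot i j x ->
  0 < adot i j z /\ shi_level m (adot i j z) = shi_level m (adot i j x).
Proof.
move=> xA Cz i1 ij jn x_gt0.
have Cx := connected_component_refl xA.
have avoid w b : connected_component (cat_complement R m n) x w -> (b <= m)%N ->
    adot i j w != b%:R.
  by move=> /connected_component_sub /cat_complement_off_levels; apply.
have sameside b : (b <= m)%N -> (adot i j z < b%:R) = (adot i j x < b%:R).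
  have C_conn : connected (connected_component (cat_complement R m n) x).
    exact: component_connected.
  move=> bm; have avoid_b w : connected_component (cat_complement R m n) x w ->
      adot i j w != b%:R by move=> Cw; apply: avoid.
  apply/idP/idP;
    by apply: (connected_avoid_lt _ _ _ C_conn (@continuous_adot R n i j) avoid_b).
have z_gt0 : 0 < adot i j z.
  have := sameside 0%N (leq0n m); rewrite mulr0n (lt_gtF x_gt0) => z_nlt0.
  have := avoid z 0%N Cz (leq0n m); rewrite mulr0n => z_ne0.
  by rewrite lt_neqAle eq_sym z_ne0 leNgt z_nlt0.
split=> //; rewrite !shi_level_count ?ltW //; congr Posz.
by apply: eq_in_count => b; rewrite mem_iota => /andP[_ bm] /=; rewrite !leNgt sameside //; lia.
Qed.

Lemma shi_entry_level {R : realType} {m n : nat} (Reg : set (pt R n)) i j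
    (k : int) (x : pt R n) :
  Reg x -> (forall z, Reg z -> 0 <= adot i j z /\ off_levels m (adot i j z)) ->
  shi_entry R m n Reg i j k <-> (forall z, Reg z -> k = shi_level m (adot i j z)).
Proof.
move=> Rx reg; split.
- move=> [k_bnd [k_lt k_eq]] z Rz; have [z_ge0 z_off] := reg z Rz.
  by apply/shi_levelP => //; split=> // [/k_lt|/k_eq]; apply.
- move=> kE; have [x_ge0 x_off] := reg x Rx.
  have [k_bnd _ _] := (shi_levelP _ _ _ x_ge0 x_off).2 (kE x Rx).
  split=> //; split=> [klt|keq] z Rz; have [z_ge0 z_off] := reg z Rz;
    have [_ z_lt z_eq] := (shi_levelP _ _ _ z_ge0 z_off).2 (kE z Rz).
  + exact: z_lt.
  + exact: z_eq.
Qed.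

Lemma component_shi_entry {R : realType} {m n : nat} {x : pt R n} {i j : nat}
    {k : int} :
  cat_complement R m n x ->
  (forall z, connected_component (cat_complement R m n) x z -> dominant R n z) ->
  (1 <= i)%N -> (i <= j)%N -> (j <= n)%N ->
  shi_entry R m n (connected_component (cat_complement R m n) x) i j k <->
  (forall z, connected_component (cat_complement R m n) x z ->
     k = shi_level m (adot i j z)).
Proof.
move=> xA C_dom i1 ij jn; apply: shi_entry_level (connected_component_refl xA) _.
move=> z Cz; split; first exact: C_dom.
exact: cat_complement_off_levels (connected_component_sub Cz) i1 ij jn.
Qed.

Lemma component_shi_tableau {R : realType} {m n : nat} {x : pt R n} :
  cat_complement R m n x ->
  (forall i j, (1 <= i)%N -> (i <= j)%N -> (j <= n)%N -> 0 < adot i j x) ->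
  dominant_region R m n (connected_component (cat_complement R m n) x) /\
  forall i j, (1 <= i)%N -> (i <= j)%N -> (j <= n)%N ->
    shi_entry R m n (connected_component (cat_complement R m n) x) i j
      (shi_level m (adot i j x)).
Proof.
move=> xA x_gt0; have comp z i j := @component_shi_level R m n x z i j xA.
have C_dom z : connected_component (cat_complement R m n) x z -> dominant R n z.
  by move=> Cz i j i1 ij jn; have [/ltW] := comp z i j Cz i1 ij jn (x_gt0 i j i1 ij jn).
split; first by split; [exists x | exact: C_dom].
move=> i j i1 ij jn; apply/(component_shi_entry xA C_dom i1 ij jn) => z Cz.
by have [_ ->] := comp z i j Cz i1 ij jn (x_gt0 i j i1 ij jn).
Qed.

Lemma exists_point_of_partition (R : realType) {m n : nat} {lam : nat -> nat} :
  partitionP m n lam -> exists x : pt R n,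
    [/\ cat_complement R m n x,
        forall i j, (1 <= i)%N -> (i <= j)%N -> (j <= n)%N -> 0 < adot i j x &
        forall i, (1 <= i)%N -> (i <= n)%N ->
          (lam i)%:Z = \sum_(i <= j < n.+1) shi_level m (adot i j x)].
Proof.
move=> /(exists_generic_gaps R) [y [gen lamE]]; have [x xV adotE] := exists_point_adot n y.
exists x; split.
- by split=> // i j b i1 ij jn bm; rewrite adotE //; apply: (gen i j i1 ij jn).2.
- by move=> i j i1 ij jn; rewrite adotE //; have [] := gen i j i1 ij jn.
- move=> i i1 iN; rewrite lamE //.
  by apply: eq_big_nat => j /andP[ij jn]; rewrite adotE.
Qed.

Lemma exists_partition_of_point {R : realType} (m : nat) {n : nat} {x : pt R n} :
  dominant R n x -> exists2 lam, partitionP m n lam &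
    forall i, (1 <= i)%N -> (i <= n)%N ->
      (lam i)%:Z = \sum_(i <= j < n.+1) shi_level m (adot i j x).
Proof.
move=> xdom; pose lam i := absz (\sum_(i <= j < n.+1) shi_level m (adot i j x)).
have lamE i : (1 <= i)%N -> (i <= n)%N ->
    (lam i)%:Z = \sum_(i <= j < n.+1) shi_level m (adot i j x).
  move=> i1 iN; rewrite /lam gez0_abs // big_nat_cond sumr_ge0 // => j.
  by rewrite andbT => /andP[ij jn]; apply/shi_level_ge0/xdom.
clearbody lam; exists lam => //.
split=> i i1 iN; rewrite -lez_nat.
- have iN' : (i <= n)%N := ltnW iN.
  rewrite (lamE i.+1 isT iN) (lamE i i1 iN') (@big_ltn _ _ _ i n.+1 _ iN').
  apply: ler_wpDl; first exact/shi_level_ge0/xdom.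
  apply: ler_sum_nat => j /andP[ij jn]; apply: le_shi_level.
  by rewrite (adot_split x i i j) lerDr xdom // ltnW.
- rewrite (lamE i i1 iN); apply: le_trans (ler_sum_nat (G := fun=> m%:Z) _) _.
    by move=> j _; apply: shi_level_le.
  by rewrite sumr_const_nat -mulr_natr natz -PoszM lez_nat leq_mul //; lia.
Qed.

Lemma phibar_point {R : realType} {m n : nat} {x : pt R n} {lam : nat -> nat} :
  dominant R n x ->
  (forall i, (1 <= i)%N -> (i <= n)%N ->
     (lam i)%:Z = \sum_(i <= j < n.+1) shi_level m (adot i j x)) ->
  forall i j, (1 <= i)%N -> (i <= j)%N -> (j <= n)%N ->
    phibar m n lam i j = shi_level m (adot i j x).
Proof. by move=> xdom; apply: phibar_shi_level => // i t j *; apply: adot_split. Qed.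

Theorem lemma4p7 (R : realType) (n m : nat) :
  (0 < n)%N -> (0 < m)%N ->
  forall k : nat -> nat -> int,
    (exists lam : nat -> nat, partitionP m n lam /\
       forall i j : nat, (1 <= i)%N -> (i <= j)%N -> (j <= n)%N ->
         phibar m n lam i j = k i j)
    <->
    (exists Reg : set (pt R n), dominant_region R m n Reg /\
       forall i j : nat, (1 <= i)%N -> (i <= j)%N -> (j <= n)%N ->
         shi_entry R m n Reg i j (k i j)).
Proof.
move=> _ _ k; split.
- case=> lam [lamP phiE].
  have [x [xA x_gt0 lamE]] := exists_point_of_partition R lamP.
  have xdom : dominant R n x by move=> i j i1 ij jn; apply/ltW/x_gt0.
  have [Reg_dom Reg_shi] := component_shi_tableau xA x_gt0.
  exists (connected_component (cat_complement R m n) x); split=> // i j i1 ij jn.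
  by rewrite -phiE // (phibar_point xdom lamE) //; apply: Reg_shi.
- case=> Reg [[[x xA ->] Reg_dom] Reg_shi].
  have Cx := connected_component_refl xA; have xdom := Reg_dom x Cx.
  have [lam lamP lamE] := exists_partition_of_point m xdom.
  exists lam; split=> // i j i1 ij jn; rewrite (phibar_point xdom lamE) //.
  by rewrite ((component_shi_entry xA Reg_dom i1 ij jn).1 (Reg_shi i j i1 ij jn) x Cx).
Qed.
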